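(* A number $t\in \frac{n+m}{2}+\mathbb Z$ is critical (i.e. $t\in\mathrm{Crit}$) if and only if $$|t-\kappa|<L+\tfrac12 \qquad (I)$$ and, in addition, in the exceptional case ($n\equiv m\equiv 1 \bmod 2$) $t$ satisfies the parity condition $$t-\kappa'\in (2\mathbb N-\epsilon)\cup -(2\mathbb N-1-\epsilon),$$ where $\epsilon\in\{0,1\}$, $\epsilon\equiv\delta+\delta' \bmod 2$, and $\mathbb N=\{1,2,3,\dots\}$.
   Context: Let $n,m\ge 1$ be integers, not both equal to $1$. For $N\ge1$ put $L_0^+(N):=\{(w,l)\in\mathbb Z\times\mathbb Z^N:\ l_1>l_2>\dots>l_N,\ l_i+l_{N+1-i}=0 \text{ for all } i,\ w+l_i\equiv N+1 \bmod 2 \text{ for all } i\}$. Fix $(w,l)\in L_0^+(n)$, $(w',l')\in L_0^+(m)$ and $\delta,\delta'\in\{0,1\}$ (the Langlands parameters of archimedean components $\pi_\infty\cong J(-w,l)\otimes \mathrm{sgn}^\delta$, $\sigma_\infty\cong J(-w',l')\otimes\mathrm{sgn}^{\delta'}$ of cohomological cuspidal representations of $GL_n$, $GL_m$ over $\mathbb Q$). Representations of the Weil group $W_{\mathbb R}$ (Knapp's notation): for an integer $l\ge1$ and $t\in\mathbb C$, $(l,t)$ is the irreducible 2-dimensional representation, and for $\epsilon\in\{0,1\}$, $(\mathrm{sgn}^\epsilon,t)$ is the 1-dimensional one; $(0,t):=(\mathrm{sgn}^0,t)\oplus(\mathrm{sgn}^1,t)$. Their $L$-factors are $L(s,(l,t))=\Gamma_{\mathbb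 C}(s+t+\frac l2)$, $L(s,(\mathrm{sgn}^\epsilon,t))=\Gamma_{\mathbb R}(s+t+\epsilon)$, multiplicative in direct sums, where $\Gamma_{\mathbb R}(s)=\pi^{-s/2}\Gamma(s/2)$, $\Gamma_{\mathbb C}(s)=2(2\pi)^{-s}\Gamma(s)$. The contragredient of $(l,t)$ is $(l,-t)$ and that of $(\mathrm{sgn}^\epsilon,t)$ is $(\mathrm{sgn}^\epsilon,-t)$. Put $\pi^W:=\bigoplus_{i=1}^{\lfloor n/2\rfloor}(l_i,-w/2)$, plus the summand $(\mathrm{sgn}^\delta,-w/2)$ if $n$ is odd; define $\sigma^W$ analogously from $(w',l',\delta',m)$; and $\tau:=\pi^W\otimes\sigma^W$. A number $t\in\frac{n+m}{2}+\mathbb Z$ is called critical if neither $s\mapsto L(s,\tau)$ nor $s\mapsto L(1-s,\check\tau)$ has a pole at $s=t$; $\mathrm{Crit}$ denotes the set of critical numbers. Put $\kappa:=\frac12(w+w'+1)$, $\kappa':=\kappa-\frac12$. The exceptional case is $n\equiv m\equiv1\bmod 2$. Let $L_0:=\min\{|l_i-l'_j|:1\le i\le n,1\le j\le m,\ i\ne\frac{n+1}{2}\text{ or } j\ne \frac{m+1}{2}\}$ and $L:=L_0/2$. *)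

(* All half-integers are handled as rationals (rat). *)
From HB Require Import structures.
From mathcomp Require Import all_boot all_order all_algebra.
Set Implicit Arguments. Unset Strict Implicit. Unset Printing Implicit Defensive.
Import Order.TTheory GRing.Theory Num.Theory.
Local Open Scope ring_scope.

(* (w,l) in L_0^+(N).  The sequence l_1,...,l_N is encoded by l : nat -> int
   with  l i = l_{i+1}  (0-based indexing); values of l at i >= N are irrelevant. *)
Definition L0plus (N : nat) (w : int) (l : nat -> int) : Prop :=
  (forall i : nat, (i.+1 < N)%N -> l i.+1 < l i) /\
  (forall i : nat, (i < N)%N -> l i + l (N.-1 - i)%N = 0) /\
  (forall i : nat, (i < N)%N -> (w + l i = (N.+1)%:Z %[mod 2])%Z).

(* Irreducible representations of the Weil group W_R (Knapp's notation):
   WTwo l t  is (l,t) (meaningful for l >= 1),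
   WOne e t  is (sgn^e,t).
   A (finite-dimensional semisimple) representation is a list of irreducibles
   (direct sum). *)
Inductive WRep := WTwo of nat & rat | WOne of bool & rat.

(* (l,t) as a representation, with the convention (0,t) := (sgn^0,t)+(sgn^1,t) *)
Definition Wtwo (l : nat) (t : rat) : seq WRep :=
  if l == 0%N then [:: WOne false t; WOne true t] else [:: WTwo l t].

(* Tensor products of irreducibles (Knapp's rules). *)
Definition Wtens1 (a b : WRep) : seq WRep :=
  match a, b with
  | WTwo l t, WTwo l' t' => Wtwo (l + l') (t + t') ++ Wtwo (if (l <= l')%N then l' - l else l - l')%N (t + t')
  | WTwo l t, WOne _ t' => [:: WTwo l (t + t')]
  | WOne _ t, WTwo l' t' => [:: WTwo l' (t + t')]
  | WOne e t, WOne e' t' => [:: WOne (addb e e') (t + t')]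
  end.

Definition Wtens (r1 r2 : seq WRep) : seq WRep :=
  flatten [seq Wtens1 a b | a <- r1, b <- r2].

Definition Wcontra1 (a : WRep) : WRep :=
  match a with WTwo l t => WTwo l (- t) | WOne e t => WOne e (- t) end.
Definition Wcontra (r : seq WRep) : seq WRep := map Wcontra1 r.

(* Poles of Gamma_C(x) = 2(2pi)^{-x} Gamma(x): x in {0,-1,-2,...};
   poles of Gamma_R(x) = pi^{-x/2} Gamma(x/2): x in {0,-2,-4,...}. *)
Definition GammaC_pole (x : rat) : bool := (x \is a Num.int) && (x <= 0).
Definition GammaR_pole (x : rat) : bool := GammaC_pole (x / 2).

(* s is a pole of the L-factor of an irreducible:
   L(s,(l,t)) = Gamma_C(s+t+l/2), L(s,(sgn^e,t)) = Gamma_R(s+t+e). *)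
Definition Lpole1 (a : WRep) (s : rat) : bool :=
  match a with
  | WTwo l t => GammaC_pole (s + t + l%:R / 2)
  | WOne e t => GammaR_pole (s + t + (e : nat)%:R)
  end.

(* L(s,rho) is the product of the L-factors of the summands; since Gamma has
   no zeros, it has a pole at s iff some factor does. *)
Definition Lpole (r : seq WRep) (s : rat) : bool := has (fun a => Lpole1 a s) r.

Definition piW (N : nat) (w : int) (l : nat -> int) (delta : bool) : seq WRep :=
  [seq WTwo (absz (l i)) (- (w%:~R : rat) / 2) | i <- iota 0 N./2]
  ++ (if odd N then [:: WOne delta (- (w%:~R : rat) / 2)] else [::]).

Definition tau (n m : nat) (w w' : int) (l l' : nat -> int) (d d' : bool) :=
  Wtens (piW n w l d) (piW m w' l' d').

Definition critical (n m : nat) (w w' : int) (l l' : nat -> int) (d d' : bool)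
  (t : rat) : bool :=
  ~~ Lpole (tau n m w w' l l' d d') t && ~~ Lpole (Wcontra (tau n m w w' l l' d d')) (1 - t).

(* Admissible index pairs (0-based): i < n, j < m, not both the middle indices
   (1-based: i = (n+1)/2 and j = (m+1)/2, which only exist for n, m odd). *)
Definition adm_pair (n m : nat) (i j : nat) : bool :=
  [&& (i < n)%N, (j < m)%N & ~~ [&& odd n, odd m, i == n./2 & j == m./2]].

Definition is_L0 (n m : nat) (l l' : nat -> int) (L0 : nat) : Prop :=
  (exists i j, adm_pair n m i j /\ L0 = absz (l i - l' j)) /\
  (forall i j, adm_pair n m i j -> (L0 <= absz (l i - l' j))%N).

Definition kappa (w w' : int) : rat := ((w + w' + 1)%:~R) / 2.
Definition kappa' (w w' : int) : rat := kappa w w' - 1 / 2.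

From HB Require Import structures.
From mathcomp Require Import all_boot all_order all_algebra.
From mathcomp Require Import zify ring lra.
Set Implicit Arguments. Unset Strict Implicit. Unset Printing Implicit Defensive.
Import Order.TTheory GRing.Theory Num.Theory.
Local Open Scope ring_scope.

(* Write t = (Y + w + w')/2 with Y an integer.  Every summand of tau has the
   same twist -(w + w')/2, so all pole conditions become conditions on Y.  A
   two-dimensional summand (L, .) of tau is pole free at t and 1 - t iff
   |Y - 1| <= L (Y + L is always even).  The two-dimensional summands are
   (|l_i| + |l'_j|, .) and (||l_i| - |l'_j||, .) for i, j in the first halves,
   and (|l_i|, .), (|l'_j|, .) when m, resp. n, is odd; by the symmetry
   l_{N+1-i} = -l_i these lengths are, up to the redundant sums, exactly the
   |l_i - l'_j| over admissible pairs, whose minimum is L0.  A one-dimensional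
   summand only occurs when n and m are both odd, and it yields the parity
   condition. *)

Lemma rat_int_div (z d : int) : d != 0 ->
  ((z%:~R / d%:~R : rat) \is a Num.int) = (d %| z)%Z.
Proof.
move=> d_neq0; apply/idP/idP; last exact: Qint_dvdz.
case/intrP=> k zdk; apply/dvdzP; exists k; apply/eqP.
by rewrite -(eqr_int rat) intrM -zdk mulfVK ?intr_eq0.
Qed.

Lemma half_int_eq (x y : int) : ((x%:~R / 2 : rat) = y%:~R) <-> x = 2 * y.
Proof.
split=> [xy|->]; last by rewrite intrM; field.
by apply/eqP; rewrite -(eqr_int rat) intrM -xy; apply/eqP; field.
Qed.

Lemma half_int_lt (x y : int) : ((x%:~R / 2 : rat) < y%:~R / 2) = (x < y).
Proof. by rewrite ltr_pM2r ?ltr_int // invr_gt0. Qed.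

Lemma GammaC_pole_half (z : int) :
  GammaC_pole (z%:~R / 2) = (2 %| z)%Z && (z <= 0).
Proof.
rewrite /GammaC_pole (@rat_int_div z 2) //.
by rewrite pmulr_lle0 ?lerz0 // invr_gt0 ltr0z.
Qed.

Lemma GammaR_pole_half (z : int) :
  GammaR_pole (z%:~R / 2) = (4 %| z)%Z && (z <= 0).
Proof.
rewrite /GammaR_pole /GammaC_pole -mulrA -invfM.
rewrite (@rat_int_div z 4) //.
by rewrite pmulr_lle0 ?lerz0 // invr_gt0 ltr0z.
Qed.

Definition Wcrit1 (t : rat) (a : WRep) : bool :=
  ~~ Lpole1 a t && ~~ Lpole1 (Wcontra1 a) (1 - t).

Lemma critical_all n m w w' l l' d d' t :
  critical n m w w' l l' d d' t = all (Wcrit1 t) (tau n m w w' l l' d d').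
Proof.
rewrite /critical /Lpole /Wcontra has_map -!all_predC -all_predI.
exact: eq_all.
Qed.

Lemma all_Wtens (P : pred WRep) (r1 r2 : seq WRep) :
  all P (Wtens r1 r2) = all (fun a => all (fun b => all P (Wtens1 a b)) r2) r1.
Proof.
elim: r1 => //= a r1 IH; rewrite -IH /Wtens /= flatten_cat all_cat.
by congr (_ && _); clear IH; elim: r2 => //= b r2 IHr2; rewrite all_cat IHr2.
Qed.

Lemma all_piW (P : pred WRep) N w l d : all P (piW N w l d) <->
  (forall i, (i < N./2)%N -> P (WTwo (absz (l i)) (- (w%:~R : rat) / 2))) /\
  (odd N -> P (WOne d (- (w%:~R : rat) / 2))).
Proof.
rewrite /piW all_cat all_map; split.
- case/andP=> /allP Phalf Podd; split.
  + by move=> i iN; apply: Phalf; rewrite mem_iota.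
  + by move=> oN; rewrite oN /= andbT in Podd.
- case=> Phalf Podd; apply/andP; split.
  + by apply/allP => i; rewrite mem_iota => /Phalf.
  + by case: (odd N) Podd => //= ->.
Qed.

Section SummandConditions.

Variables (t c : rat) (Y : int).
Hypothesis tcY : t + c = Y%:~R / 2.

Let t_def : t = Y%:~R / 2 - c.
Proof. by rewrite -tcY addrK. Qed.

Lemma Wcrit1_WTwo (L : nat) : (2 %| Y + L%:Z)%Z ->
  Wcrit1 t (WTwo L c) = (`|Y - 1| <= L%:Z).
Proof.
move=> YL_even; rewrite /Wcrit1 /=.
have -> : t + c + L%:R / 2 = (Y + L%:Z)%:~R / 2.
  by rewrite t_def intrD pmulrn; field.
have -> : 1 - t + - c + L%:R / 2 = (2 - Y + L%:Z)%:~R / 2.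
  by rewrite t_def !intrD intrN pmulrn; field.
rewrite !GammaC_pole_half; lia.
Qed.

Definition sgn_pole_free (e : nat) : bool :=
  ~~ ((4 %| Y + 2 * e%:Z)%Z && (Y + 2 * e%:Z <= 0)) &&
  ~~ ((4 %| 2 - Y + 2 * e%:Z)%Z && (2 - Y + 2 * e%:Z <= 0)).

Lemma Wcrit1_WOne (e : bool) : Wcrit1 t (WOne e c) = sgn_pole_free e.
Proof.
rewrite /Wcrit1 /=.
have -> : t + c + (e : nat)%:R = (Y + 2 * (e : nat)%:Z)%:~R / 2.
  by rewrite t_def intrD intrM pmulrn; field.
have -> : 1 - t + - c + (e : nat)%:R = (2 - Y + 2 * (e : nat)%:Z)%:~R / 2.
  by rewrite t_def !intrD intrN intrM pmulrn; field.
by rewrite !GammaR_pole_half.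
Qed.

Lemma all_Wcrit1_Wtwo (L : nat) : (2 %| Y + L%:Z)%Z ->
  all (Wcrit1 t) (Wtwo L c) = (`|Y - 1| <= L%:Z).
Proof.
move=> YL_even; rewrite /Wtwo; case: eqP => [L_eq0|_] /=.
- by rewrite !Wcrit1_WOne /sgn_pole_free; lia.
- by rewrite andbT Wcrit1_WTwo.
Qed.

End SummandConditions.

Section WeightSequence.

Variables (N : nat) (w : int) (l : nat -> int).
Hypothesis wl : L0plus N w l.

Lemma L0plus_decr a b : (a < b)%N -> (b < N)%N -> l b < l a.
Proof.
case: wl => decr _ ab; rewrite -(subnKC ab).
elim: (b - a.+1)%N => [|d IH] bN; first by rewrite addn0 decr //; lia.
rewrite addnS (lt_trans _ (IH _)) ?decr //; lia.
Qed.

Lemma L0plus_sym i : (i < N)%N -> l i = - l (N.-1 - i)%N.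
Proof. by case: wl => _ [sym _] iN; have := sym i iN; lia. Qed.

Lemma L0plus_gt0 i : (i < N./2)%N -> 0 < l i.
Proof.
move=> iN; have := @L0plus_decr i (N.-1 - i)%N.
have := @L0plus_sym i; lia.
Qed.

Lemma L0plus_mid : odd N -> l N./2 = 0.
Proof.
move=> oN; have mid : (N.-1 - N./2 = N./2)%N by lia.
by have := @L0plus_sym N./2; rewrite mid; lia.
Qed.

Lemma L0plus_parity i : (i < N)%N -> (2 %| w + l i - N%:Z - 1)%Z.
Proof. by case: wl => _ [_ par] iN; have := par i iN; lia. Qed.

Lemma L0plus_abs_fold i : (i < N)%N ->
  (exists2 j, (j < N./2)%N & `|l i| = `|l j|) \/ (odd N /\ i = N./2).
Proof.
move=> iN; case: (ltnP i N./2) => [|i_ge]; first by left; exists i.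
case: (ltnP (N.-1 - i) N./2) => [j_lt|j_ge]; last by right; lia.
by left; exists (N.-1 - i)%N; rewrite // (L0plus_sym iN) normrN.
Qed.

End WeightSequence.

Lemma adm_bounds_iff_L0 n m l l' L0 (x : int) : is_L0 n m l l' L0 ->
  (forall i j, adm_pair n m i j -> x <= `|l i - l' j|) <-> x <= L0%:Z.
Proof.
case=> [[i0 [j0 [adm0 ->]]] L0_min]; split=> [|x_le i j /L0_min]; last lia.
by move/(_ i0 j0 adm0); lia.
Qed.

Section Criticality.

Variables (n m : nat) (w w' : int) (l l' : nat -> int) (d d' : bool).
Hypotheses (wl : L0plus n w l) (wl' : L0plus m w' l').

Lemma half_bounds_iff_adm_bounds (x : int) :
  [/\ forall i j, (i < n./2)%N -> (j < m./2)%N -> x <= `|l i - l' j|,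
      odd m -> forall i, (i < n./2)%N -> x <= `|l i| &
      odd n -> forall j, (j < m./2)%N -> x <= `|l' j|] <->
  (forall i j, adm_pair n m i j -> x <= `|l i - l' j|).
Proof.
split=> [[bound_TT bound_TO bound_OT] i j | bound].
- case/and3P=> i_lt j_lt.
  case: (L0plus_abs_fold wl i_lt) => [[i' i'_lt li]|[on ->]];
  case: (L0plus_abs_fold wl' j_lt) => [[j' j'_lt lj]|[om ->]] not_mid.
  + have := bound_TT _ _ i'_lt j'_lt.
    have := L0plus_gt0 wl i'_lt; have := L0plus_gt0 wl' j'_lt; lia.
  + by have := bound_TO om _ i'_lt; rewrite (L0plus_mid wl' om); lia.
  + by have := bound_OT on _ j'_lt; rewrite (L0plus_mid wl on); lia.
  + by rewrite on om !eqxx in not_mid.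
- split=> [i j i_lt j_lt | om i i_lt | on j j_lt].
  + by apply: bound; rewrite /adm_pair; lia.
  + have := bound i m./2; rewrite (L0plus_mid wl' om) subr0; apply.
    by rewrite /adm_pair; lia.
  + have := bound n./2 j; rewrite (L0plus_mid wl on) sub0r normrN; apply.
    by rewrite /adm_pair; lia.
Qed.

Variables (Y : int) (t : rat).
Hypothesis tY : t = (Y%:~R + w%:~R + w'%:~R) / 2.
Hypothesis Y_parity : (2 %| Y + w + w' - n%:Z - m%:Z)%Z.

Let twist : t + (- (w%:~R : rat) / 2 + - (w'%:~R : rat) / 2) = Y%:~R / 2.
Proof. by rewrite tY; field. Qed.

Let parity_TT i j : (i < n./2)%N -> (j < m./2)%N ->
  (2 %| Y + (absz (l i))%:Z + (absz (l' j))%:Z)%Z.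
Proof.
move=> i_lt j_lt; have := L0plus_parity wl (_ : (i < n)%N).
have := L0plus_parity wl' (_ : (j < m)%N); lia.
Qed.

Let parity_TO i : odd m -> (i < n./2)%N -> (2 %| Y + (absz (l i))%:Z)%Z.
Proof.
move=> om i_lt; have := L0plus_parity wl (_ : (i < n)%N).
have := L0plus_parity wl' (_ : (m./2 < m)%N); have := L0plus_mid wl' om; lia.
Qed.

Let parity_OT j : odd n -> (j < m./2)%N -> (2 %| Y + (absz (l' j))%:Z)%Z.
Proof.
move=> on j_lt; have := L0plus_parity wl' (_ : (j < m)%N).
have := L0plus_parity wl (_ : (n./2 < n)%N); have := L0plus_mid wl on; lia.
Qed.

Lemma Y_even : odd n -> odd m -> (2 %| Y)%Z.
Proof.
move=> on om; have := L0plus_parity wl (_ : (n./2 < n)%N).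
have := L0plus_parity wl' (_ : (m./2 < m)%N).
have := L0plus_mid wl on; have := L0plus_mid wl' om; lia.
Qed.

Let crit_TT i j : (i < n./2)%N -> (j < m./2)%N ->
  all (Wcrit1 t) (Wtens1 (WTwo (absz (l i)) (- (w%:~R : rat) / 2))
                         (WTwo (absz (l' j)) (- (w'%:~R : rat) / 2))) =
  (`|Y - 1| <= `|l i - l' j|).
Proof.
move=> i_lt j_lt /=; set p := absz (l i); set q := absz (l' j).
have -> : (if (p <= q)%N then q - p else p - q)%N = absz (p%:Z - q%:Z).
  by case: leqP; lia.
have := parity_TT i_lt j_lt; have := L0plus_gt0 wl i_lt.
have := L0plus_gt0 wl' j_lt; rewrite -/p -/q => li_gt0 lj_gt0 par.
rewrite all_cat !(all_Wcrit1_Wtwo twist); lia.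
Qed.

Let crit_TO i e : odd m -> (i < n./2)%N ->
  all (Wcrit1 t) (Wtens1 (WTwo (absz (l i)) (- (w%:~R : rat) / 2))
                         (WOne e (- (w'%:~R : rat) / 2))) =
  (`|Y - 1| <= `|l i|).
Proof.
move=> om i_lt /=; rewrite andbT (Wcrit1_WTwo twist) ?parity_TO //; lia.
Qed.

Let crit_OT j e : odd n -> (j < m./2)%N ->
  all (Wcrit1 t) (Wtens1 (WOne e (- (w%:~R : rat) / 2))
                         (WTwo (absz (l' j)) (- (w'%:~R : rat) / 2))) =
  (`|Y - 1| <= `|l' j|).
Proof.
move=> on j_lt /=; rewrite andbT (Wcrit1_WTwo twist) ?parity_OT //; lia.
Qed.

Lemma critical_iff_bounds : critical n m w w' l l' d d' t <->
  [/\ forall i j, (i < n./2)%N -> (j < m./2)%N -> `|Y - 1| <= `|l i - l' j|,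
      odd m -> forall i, (i < n./2)%N -> `|Y - 1| <= `|l i|,
      odd n -> forall j, (j < m./2)%N -> `|Y - 1| <= `|l' j| &
      odd n -> odd m -> sgn_pole_free Y (d (+) d')].
Proof.
rewrite critical_all /tau all_Wtens.
split=> [/all_piW [crit_half crit_mid] | [bound_TT bound_TO bound_OT sgn_free]].
- split.
  + move=> i j i_lt j_lt; have /all_piW [crit _] := crit_half i i_lt.
    by rewrite -crit_TT // crit.
  + move=> om i i_lt; have /all_piW [_ crit] := crit_half i i_lt.
    by rewrite -(crit_TO d') // crit.
  + move=> on j j_lt; have /all_piW [crit _] := crit_mid on.
    by rewrite -(crit_OT d) // crit.
  + move=> on om; have /all_piW [_ crit] := crit_mid on.
    by have := crit om; rewrite /= andbT (Wcrit1_WOne twist).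
- apply/all_piW; split=> [i i_lt | on]; apply/all_piW; split.
  + by move=> j j_lt; rewrite crit_TT ?bound_TT.
  + by move=> om; rewrite crit_TO ?bound_TO.
  + by move=> j j_lt; rewrite crit_OT ?bound_OT.
  + by move=> om; rewrite /= andbT (Wcrit1_WOne twist) sgn_free.
Qed.

End Criticality.

Lemma kappa_dist_lt (Y w w' : int) (L0 : nat) (t : rat) :
  t = (Y%:~R + w%:~R + w'%:~R) / 2 ->
  (`|t - kappa w w'| < L0%:R / 2 + 1 / 2) = (`|Y - 1| <= L0%:Z).
Proof.
move=> ->; have -> : (Y%:~R + w%:~R + w'%:~R) / 2 - kappa w w' = (Y - 1)%:~R / 2.
  by rewrite /kappa !intrD intrN; field.
have -> : L0%:R / 2 + 1 / 2 = (L0%:Z + 1)%:~R / 2 :> rat.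
  by rewrite intrD pmulrn; field.
rewrite normrM normfV -intr_norm (ger0_norm (_ : 0 <= 2)) // half_int_lt.
by rewrite ltzD1.
Qed.

Lemma sgn_pole_free_iff (Y w w' : int) (t : rat) (e : nat) :
  t = (Y%:~R + w%:~R + w'%:~R) / 2 -> (2 %| Y)%Z -> (e <= 1)%N ->
  sgn_pole_free Y e <->
  exists k : nat, (0 < k)%N /\ (t - kappa' w w' = (2 * k)%:R - e%:R \/
                                t - kappa' w w' = - ((2 * k)%:R - 1 - e%:R)).
Proof.
move=> -> Y_even e_le1.
have -> : (Y%:~R + w%:~R + w'%:~R) / 2 - kappa' w w' = Y%:~R / 2.
  by rewrite /kappa' /kappa !intrD; field.
have pos_eq k : (Y%:~R / 2 = (2 * k)%:R - e%:R :> rat) <->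
    Y = 2 * ((2 * k)%N%:Z - e%:Z).
  by rewrite -half_int_eq intrB !pmulrn.
have neg_eq k : (Y%:~R / 2 = - ((2 * k)%:R - 1 - e%:R) :> rat) <->
    Y = 2 * (- ((2 * k)%N%:Z - 1 - e%:Z)).
  by rewrite -half_int_eq intrN !intrB !pmulrn.
split=> [|[k [k_gt0 [/pos_eq|/neg_eq] ->]]]; rewrite /sgn_pole_free; [|lia..].
case/boolP: (4 %| Y + 2 * e%:Z)%Z => div4.
- exists (absz ((Y + 2 * e%:Z) %/ 4)%Z); split; [lia | left; apply/pos_eq; lia].
- exists (absz ((2 - Y + 2 * e%:Z) %/ 4)%Z); split; [lia | right; apply/neg_eq; lia].
Qed.

Unset Implicit Arguments.

Theorem proposition2p1 (n m : nat) (w w' : int) (l l' : nat -> int)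
  (delta delta' : bool) (L0 : nat) (t : rat) :
  (0 < n)%N -> (0 < m)%N -> ~ (n = 1%N /\ m = 1%N) ->
  L0plus n w l -> L0plus m w' l' ->
  is_L0 n m l l' L0 ->
  t - ((n + m)%:R / 2) \is a Num.int ->
  (critical n m w w' l l' delta delta' t <->
   (`|t - kappa w w'| < L0%:R / 2 + 1 / 2 /\
    (odd n && odd m ->
     let eps : nat := addb delta delta' in
     exists k : nat, (0 < k)%N /\
       (t - kappa' w w' = (2 * k)%:R - eps%:R \/
        t - kappa' w w' = - ((2 * k)%:R - 1 - eps%:R))))).
Proof.
move=> _ _ _ wl wl' L0_min /intrP [k tk].
set Y := (n + m)%N%:Z + 2 * k - w - w'.
have tY : t = (Y%:~R + w%:~R + w'%:~R) / 2.
  have -> : t = (n + m)%:R / 2 + k%:~R by rewrite -tk; ring.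
  by rewrite /Y !intrD !intrN intrM !pmulrn; field.
have Y_parity : (2 %| Y + w + w' - n%:Z - m%:Z)%Z by rewrite /Y; lia.
have eps_le1 : (delta (+) delta' <= 1)%N by case: (_ (+) _).
have bounds_iff := iff_trans (half_bounds_iff_adm_bounds wl wl' `|Y - 1|)
                             (adm_bounds_iff_L0 `|Y - 1| L0_min).
have sgn_iff on om := sgn_pole_free_iff tY (Y_even wl wl' Y_parity on om) eps_le1.
rewrite (kappa_dist_lt L0 tY).
apply: iff_trans (critical_iff_bounds delta delta' wl wl' tY Y_parity) _.
split=> [[bound_TT bound_TO bound_OT sgn_free] | [bound parity]].
- split; first exact/bounds_iff.
  by case/andP=> on om; apply/(sgn_iff on om)/sgn_free.
- have [bound_TT bound_TO bound_OT] := bounds_iff.2 bound.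
  by split=> // on om; apply/(sgn_iff on om)/parity; rewrite on om.
Qed.
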